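(* Every pairwise social choice correspondence that is strategyproof and strongly Condorcet-consistent satisfies Condorcet-stability (COS).
   Context: Let $A$ be a finite set of alternatives; a preference profile $R$ assigns a strict total order $\succ_i$ on $A$ to each voter $i$ of a finite non-empty electorate $N\subseteq\{1,2,\dots\}$; $\mathcal{R}^*(A)$ is the set of all profiles over all electorates. $g_R(x,y)=|\{i: x\succ_i y\}|-|\{i: y\succ_i x\}|$; $x\succsim_R y$ iff $g_R(x,y)\ge0$, with strict part $\succ_R$. A Condorcet winner is $x$ with $x\succ_R y$ for all $y\ne x$. An SCC is $f:\mathcal{R}^*(A)\to 2^A\setminus\{\emptyset\}$; it is pairwise if $f(R)=f(R')$ whenever $g_R=g_{R'}$. Fishburn's extension: for $X\ne Y$, $X\succ_i^F Y$ iff $x\succ_i y$ for all $x\in X\setminus Y,y\in Y$ and for all $x\in X,y\in Y\setminus X$. $f$ is strategyproof if no voter $i$ can change only his own preference to move from $R$ to $R'$ with $f(R')\succ_i^F f(R)$. $f$ is strongly Condorcet-consistent if $f(R)=\{x\}$ holds iff $x$ is the Condorcet winner in $R$. $f$ satisfies COS if for every profile $R$ there is no $x\in A$ with $f(R)\setminus\{x\}\ne\emptyset$ and $x\succ_R y$ for all $y\in f(R)\setminus\{x\}$. *)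

From HB Require Import structures.
From mathcomp Require Import all_boot all_order all_algebra.
From mathcomp Require Import finmap.
Set Implicit Arguments. Unset Strict Implicit. Unset Printing Implicit Defensive.
Local Open Scope fset_scope.

Section SCC.
Variable A : finType.

(* A strict total order on A, given as a boolean relation: r x y means x is
   strictly preferred to y. *)
Definition strict_total (r : rel A) : Prop :=
  [/\ irreflexive r, transitive r & forall x y, x != y -> r x y || r y x].

(* A preference profile: a finite non-empty electorate N of positive
   naturals, and a strict total order for each voter in N.  (Values of
   [pref] outside the electorate are irrelevant.) *)
Record profile := Profile {
  elec : {fset nat};
  pref : nat -> rel A;
  elec_nonempty : elec != fset0;
  elec_pos : forall i, i \in elec -> 0 < i;
  pref_strict : forall i, i \in elec -> strict_total (pref i)
}.

Definition nprefer (R : profile) (x y : A) : nat :=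
  size [seq i <- elec R | pref R i x y].

Definition margin (R : profile) (x y : A) : int :=
  (nprefer R x y)%:Z - (nprefer R y x)%:Z.

Definition maj_weak (R : profile) (x y : A) : bool := (0 <= margin R x y)%R.
Definition maj_strict (R : profile) (x y : A) : bool :=
  maj_weak R x y && ~~ maj_weak R y x.

Definition condorcet_winner (R : profile) (x : A) : Prop :=
  forall y, y != x -> maj_strict R x y.

Definition is_SCC (f : profile -> {set A}) : Prop := forall R, f R != set0.

Definition pairwise_scc (f : profile -> {set A}) : Prop :=
  forall R R' : profile, (forall x y, margin R x y = margin R' x y) -> f R = f R'.

Definition fishburn (r : rel A) (X Y : {set A}) : Prop :=
  [/\ X != Y,
      (forall x y, x \in X :\: Y -> y \in Y -> r x y) &
      (forall x y, x \in X -> y \in Y :\: X -> r x y)].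

Definition i_variant (i : nat) (R R' : profile) : Prop :=
  [/\ i \in elec R, elec R' = elec R &
      forall j, j \in elec R -> j != i -> forall x y, pref R' j x y = pref R j x y].

Definition strategyproof (f : profile -> {set A}) : Prop :=
  forall (i : nat) (R R' : profile), i_variant i R R' ->
    ~ fishburn (pref R i) (f R') (f R).

Definition strongly_condorcet_consistent (f : profile -> {set A}) : Prop :=
  forall (R : profile) (x : A), f R = [set x] <-> condorcet_winner R x.

Definition COS_stable (f : profile -> {set A}) : Prop :=
  forall (R : profile) (x : A),
    ~ ((f R :\ x != set0) /\ (forall y, y \in f R :\ x -> maj_strict R x y)).

End SCC.

From mathcomp Require Import all_boot all_order all_algebra.
From mathcomp Require Import finmap.
From mathcomp Require Import zify.
Set Implicit Arguments. Unset Strict Implicit. Unset Printing Implicit Defensive.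
Import GRing.Theory Num.Theory.

(* Suppose f R = X and x beats every other member of X by a majority.  Adding
   two voters with mutually reverse preferences Q and Q^-1 leaves the margins,
   hence f, unchanged.  Let the first of them switch to Q'.  If the margin shift
   caused by the switch does not depend on Q, pairwiseness makes the outcome W
   after the switch independent of Q, so Q may be chosen after W: all
   alternatives outside X first, then X :&: W, then X :\: W.  For this Q the
   switch is a Fishburn improvement unless W = X, so strategyproofness keeps
   f = X while the margins move by a fixed shift.  Choosing Q' so that the shift
   favours x over every y outside X and is zero on X, and repeating it more
   often than there are voters, makes x a Condorcet winner while f still
   returns X, which differs from [set x]. *)

Local Open Scope ring_scope.

Section Margins.
Variable A : finType.
Implicit Types (R : profile A) (P : rel A) (a b : A).

Lemma margin_antisym R a b : margin R b a = - margin R a b.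
Proof. rewrite /margin; lia. Qed.

Lemma maj_strictE R a b : maj_strict R a b = (0 < margin R a b).
Proof.
rewrite /maj_strict /maj_weak margin_antisym.
by case: (ltrgtP 0 (margin R a b)) => h; rewrite ?h //=; lia.
Qed.

Lemma margin_ge_opp_size R a b : - (size (elec R))%:Z <= margin R a b.
Proof.
have : (nprefer R b a <= size (elec R))%N.
  by rewrite /nprefer size_filter count_size.
rewrite /margin; lia.
Qed.

Definition vote_margin P a b : int := (P a b : nat)%:Z - (P b a : nat)%:Z.

Definition rev_rel P : rel A := fun a b => P b a.

Lemma strict_total_rev P : strict_total P -> strict_total (rev_rel P).
Proof.
case=> irrP trP totP; split.
- by move=> a; apply: irrP.
- by move=> b a c hab hbc; apply: trP hbc hab.
- by move=> a b hab; rewrite /rev_rel orbC; apply: totP.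
Qed.

Lemma vote_margin_rev P a b : vote_margin (rev_rel P) a b = - vote_margin P a b.
Proof. rewrite /vote_margin /rev_rel; lia. Qed.

End Margins.

Section AddVoters.
Variables (A : finType) (R : profile A) (P1 P2 : rel A).
Hypotheses (P1_strict : strict_total P1) (P2_strict : strict_total P2).

Definition fresh_voter : nat := (\max_(i <- (elec R : seq nat)) i).+1.

Lemma fresh_voter_gt i : i \in elec R -> (i < fresh_voter)%N.
Proof. by move=> iR; rewrite ltnS (@leq_bigmax_seq _ _ xpredT id i). Qed.

Definition add_voters_elec : {fset nat} :=
  (fresh_voter |` (fresh_voter.+1 |` elec R))%fset.

Definition add_voters_pref (i : nat) : rel A :=
  if i == fresh_voter then P1 else if i == fresh_voter.+1 then P2 else pref R i.

Lemma fresh_voter_in : fresh_voter \in add_voters_elec.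
Proof. by rewrite in_fset1U eqxx. Qed.

Lemma add_voters_elec_nonempty : add_voters_elec != fset0%fset.
Proof. by apply/eqP => elec0; have := fresh_voter_in; rewrite elec0 in_fset0. Qed.

Lemma add_voters_elec_pos i : i \in add_voters_elec -> (0 < i)%N.
Proof. by rewrite !in_fset1U => /orP[/eqP -> // | /orP[/eqP -> // | /elec_pos]]. Qed.

Lemma add_voters_pref_strict i :
  i \in add_voters_elec -> strict_total (add_voters_pref i).
Proof.
rewrite /add_voters_pref !in_fset1U.
by case: ifP => // _; case: ifP => // _ /pref_strict.
Qed.

Definition add_voters : profile A :=
  Profile add_voters_elec_nonempty add_voters_elec_pos add_voters_pref_strict.

Lemma add_voters_elec_perm :
  perm_eq add_voters_elec [:: fresh_voter, fresh_voter.+1 & elec R].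
Proof.
apply: uniq_perm; [exact: fset_uniq | | by move=> i; rewrite !in_fset1U !inE].
rewrite /= fset_uniq andbT inE negb_or ltn_eqF //=.
by apply/andP; split; apply/negP => /fresh_voter_gt; lia.
Qed.

Lemma nprefer_add_voters a b :
  nprefer add_voters a b = (P1 a b + P2 a b + nprefer R a b)%N.
Proof.
rewrite /nprefer !size_filter (permP add_voters_elec_perm) /= /add_voters_pref.
rewrite eqxx (gtn_eqF (ltnSn _)) eqxx addnA; congr (_ + _)%N.
apply: eq_in_count => i /fresh_voter_gt lt_i /=.
by rewrite (ltn_eqF lt_i) (ltn_eqF (ltn_trans lt_i (ltnSn _))).
Qed.

Lemma margin_add_voters a b :
  margin add_voters a b = margin R a b + vote_margin P1 a b + vote_margin P2 a b.
Proof. rewrite /margin /vote_margin !nprefer_add_voters !PoszD; lia. Qed.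

End AddVoters.

Section LevelOrder.
Variable A : finType.
Implicit Types (l : A -> nat) (a b : A).

Definition level_order l : rel A :=
  fun a b => (l a < l b)%N || (l a == l b) && (enum_rank a < enum_rank b)%N.

Lemma level_order_strict l : strict_total (level_order l).
Proof.
rewrite /level_order; split.
- by move=> a; rewrite ltnn eqxx ltnn.
- by move=> b a c; lia.
- move=> a b; rewrite -(inj_eq enum_rank_inj) -val_eqE /=; lia.
Qed.

Lemma level_order_lt l a b : (l a < l b)%N -> level_order l a b.
Proof. by rewrite /level_order => ->. Qed.

Lemma fishburn_level_order l (X W : {set A}) :
  (forall c y, c \notin X -> y \in X -> (l c < l y)%N) ->
  (forall y z, y \in X :&: W -> z \in X :\: W -> (l y < l z)%N) ->
  W != X -> fishburn (level_order l) W X.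
Proof.
move=> outside_first inW_first neWX; split => // a b.
- by rewrite inE => /andP[aX _] bX; apply/level_order_lt/outside_first.
- move=> aW bXW; apply: level_order_lt; case: (boolP (a \in X)) => aX.
    by apply: inW_first; rewrite // inE aX.
  by apply: outside_first; move: bXW; rewrite inE => /andP[].
Qed.

End LevelOrder.

Section Shifts.
Variables (A : finType) (X : {set A}).
Implicit Types (W : {set A}) (a b x : A).

Definition lift_block_before W a : nat :=
  if a \in X then (if a \in W then 1 else 2) else 0.
Definition lift_block_after W a : nat :=
  if a \in X then (if a \in W then 0 else 1) else 2.
Definition lift_block_shift a b : int := ((a \in X : nat)%:Z - (b \in X : nat)%:Z) *+ 2.

Lemma lift_block_shiftE W a b :
  vote_margin (level_order (lift_block_after W)) a b
    - vote_margin (level_order (lift_block_before W)) a b = lift_block_shift a b.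
Proof.
rewrite /vote_margin /level_order /lift_block_before /lift_block_after /lift_block_shift.
by case: (a \in X); case: (b \in X); case: (a \in W); case: (b \in W) => /=;
  case: (enum_rank a < enum_rank b)%N; case: (enum_rank b < enum_rank a)%N.
Qed.

Lemma fishburn_lift_block W :
  W != X -> fishburn (level_order (lift_block_before W)) W X.
Proof.
apply: fishburn_level_order => [c y /negbTE cX yX | y z].
  by rewrite /lift_block_before cX yX; case: ifP.
by rewrite /lift_block_before !inE => /andP[-> ->] /andP[/negbTE -> ->].
Qed.

Definition lift_outsider_before x W a : nat :=
  if a \in X then (if a \in W then 2 else 3) else (if a == x then 1 else 0).
Definition lift_outsider_after x W a : nat :=
  if a \in X then (if a \in W then 2 else 3) else (if a == x then 0 else 1).
Definition lift_outsider_shift x a b : int :=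
  if [&& a == x, b != x, a \notin X & b \notin X] then 2
  else if [&& b == x, a != x, a \notin X & b \notin X] then -2 else 0.

Lemma lift_outsider_shiftE x W a b :
  vote_margin (level_order (lift_outsider_after x W)) a b
    - vote_margin (level_order (lift_outsider_before x W)) a b
  = lift_outsider_shift x a b.
Proof.
rewrite /vote_margin /level_order /lift_outsider_before /lift_outsider_after.
rewrite /lift_outsider_shift.
by case: (a \in X); case: (b \in X); case: (a \in W); case: (b \in W);
  case: (a == x); case: (b == x) => /=;
  case: (enum_rank a < enum_rank b)%N; case: (enum_rank b < enum_rank a)%N.
Qed.

Lemma fishburn_lift_outsider x W :
  W != X -> fishburn (level_order (lift_outsider_before x W)) W X.
Proof.
apply: fishburn_level_order => [c y /negbTE cX yX | y z].
  by rewrite /lift_outsider_before cX yX; case: ifP; case: ifP.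
by rewrite /lift_outsider_before !inE => /andP[-> ->] /andP[/negbTE -> ->].
Qed.

End Shifts.

Section Manipulation.
Variables (A : finType) (f : profile A -> {set A}).
Hypotheses (f_pairwise : pairwise_scc f) (f_sp : strategyproof f).

Section Switch.
Variables (X : {set A}) (Q Q' : {set A} -> rel A) (D : A -> A -> int).
Hypotheses (Q_strict : forall W, strict_total (Q W))
  (Q'_strict : forall W, strict_total (Q' W)).
Hypothesis shiftD : forall W a b, vote_margin (Q' W) a b - vote_margin (Q W) a b = D a b.
Hypothesis QW_improves : forall W, W != X -> fishburn (Q W) W X.

Lemma switch_keeps_choice R : f R = X ->
  exists R', f R' = X /\ forall a b, margin R' a b = margin R a b + D a b.
Proof.
move=> fRX.
pose before W := add_voters R (Q_strict W) (strict_total_rev (Q_strict W)).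
pose after W := add_voters R (Q'_strict W) (strict_total_rev (Q_strict W)).
have margin_before W a b : margin (before W) a b = margin R a b.
  by rewrite margin_add_voters vote_margin_rev; lia.
have margin_after W a b : margin (after W) a b = margin R a b + D a b.
  by rewrite margin_add_voters vote_margin_rev -(shiftD W); lia.
(* The margins of [after W], hence its outcome, do not depend on W. *)
set W := f (after set0).
have f_after : f (after W) = W by apply: f_pairwise => a b; rewrite !margin_after.
have f_before : f (before W) = X.
  by rewrite -fRX; apply: f_pairwise => a b; rewrite margin_before.
have switch : i_variant (fresh_voter R) (before W) (after W).
  split=> //; first exact: fresh_voter_in.
  by move=> j _ /negbTE ne_j a b; rewrite /= /add_voters_pref ne_j.
have := f_sp switch; rewrite f_after f_before /= /add_voters_pref eqxx => no_gain.
exists (after set0); split; last exact: margin_after.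
by case: (eqVneq W X) => // /QW_improves.
Qed.

Lemma repeat_switch_keeps_choice k R : f R = X ->
  exists R', f R' = X /\ forall a b, margin R' a b = margin R a b + D a b *+ k.
Proof.
elim: k R => [|k IHk] R fRX.
  by exists R; split=> // a b; rewrite mulr0n addr0.
have [R1 [fR1 margin1]] := IHk R fRX.
have [R2 [fR2 margin2]] := switch_keeps_choice fR1.
exists R2; split=> // a b.
by rewrite margin2 margin1 mulrSr addrA.
Qed.

End Switch.

Lemma favour_keeps_choice (X : {set A}) (x : A) k R : f R = X ->
  exists R', f R' = X /\
    forall y, y != x -> margin R' x y = margin R x y + (if y \in X then 0 else 2) *+ k.
Proof.
move=> fRX; have [xX | xNX] := boolP (x \in X).
- have [R' [fR' margin']] := repeat_switch_keeps_choice
    (fun W => level_order_strict (lift_block_before X W))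
    (fun W => level_order_strict (lift_block_after X W))
    (@lift_block_shiftE A X) (@fishburn_lift_block A X) k fRX.
  exists R'; split=> // y _; rewrite margin' /lift_block_shift xX.
  by case: (y \in X).
- have [R' [fR' margin']] := repeat_switch_keeps_choice
    (fun W => level_order_strict (lift_outsider_before X x W))
    (fun W => level_order_strict (lift_outsider_after X x W))
    (@lift_outsider_shiftE A X x) (@fishburn_lift_outsider A X x) k fRX.
  exists R'; split=> // y ne_yx; rewrite margin' /lift_outsider_shift.
  by rewrite eqxx ne_yx xNX andbF; case: (y \in X).
Qed.

End Manipulation.

Theorem lemma5 (A : finType) (f : profile A -> {set A}) :
  is_SCC f -> pairwise_scc f -> strategyproof f -> strongly_condorcet_consistent f ->
  COS_stable f.
Proof.
move=> _ f_pairwise f_sp f_condorcet R x [X_ne_x x_beats_X].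
have [R' [fR' margin']] :=
  favour_keeps_choice f_pairwise f_sp x (size (elec R)).+1 (erefl (f R)).
have x_wins : condorcet_winner R' x.
  move=> y ne_yx; rewrite maj_strictE margin' //; case: ifPn => yX.
    by rewrite mul0rn addr0 -maj_strictE; apply: x_beats_X; rewrite in_setD1 ne_yx.
  have := margin_ge_opp_size R x y; rewrite pmulrn; lia.
by move: X_ne_x; rewrite -fR' (f_condorcet R' x).2 // setDv eqxx.
Qed.
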